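(* The eventual equality relation $E_0(\mathbb{N})$ on the Baire space $\mathbb{N}^\mathbb{N}$ is $\Pi^0_1$-graphable with diameter $2$.
   Context: $xE_0(\mathbb{N})y$ iff there is $m$ with $x(n)=y(n)$ for all $n\ge m$ ($x,y\in\mathbb{N}^\mathbb{N}$). $E$ is $\Gamma$-graphable with diameter $k$ if there is a simple undirected graph $G$ in $\Gamma$ whose connectedness relation equals $E$ and $k$ is the least integer such that any two $G$-connected points are joined by a path of length at most $k$. *)

From Stdlib Require Import Arith.

Definition baire := nat -> nat.

Definition E0 (x y : baire) : Prop :=
  exists m : nat, forall n : nat, m <= n -> x n = y n.

Definition brel := baire -> baire -> Prop.

Definition simple_graph (G : brel) : Prop :=
  (forall x y, G x y -> G y x) /\ (forall x, ~ G x x).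

(* Pi^0_1 = closed in the product topology of N^N x N^N, whose basic open
   sets are the cylinders N_s x N_t determined by finite initial segments.
   The complement of G is open: every non-edge has a basic neighbourhood
   of non-edges. *)
Definition Pi01 (G : brel) : Prop :=
  forall x y, ~ G x y ->
    exists N : nat, forall x' y' : baire,
      (forall i, i < N -> x' i = x i /\ y' i = y i) -> ~ G x' y'.

Inductive walk (G : brel) : nat -> baire -> baire -> Prop :=
| walk_nil : forall x, walk G 0 x x
| walk_cons : forall k x y z, G x y -> walk G k y z -> walk G (S k) x z.

Definition connected (G : brel) (x y : baire) : Prop :=
  exists k, walk G k x y.

Definition diam_bound (G : brel) (k : nat) : Prop :=
  forall x y, connected G x y -> exists j, j <= k /\ walk G j x y.

Definition has_diameter (G : brel) (k : nat) : Prop :=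
  diam_bound G k /\ (forall k', k' < k -> ~ diam_bound G k').

Definition Pi01_graphable_diam (E : brel) (k : nat) : Prop :=
  exists G : brel, simple_graph G /\ Pi01 G /\
    (forall x y, connected G x y <-> E x y) /\ has_diameter G k.

(* Join x and y when their first coordinates differ and they agree from
   max (x 0) (y 0) on.  Every edge lies in E0, and two eventually equal points
   are joined through the point that copies x except for a first coordinate so
   large that it also agrees with y beyond it; hence the components are the
   E0-classes and the diameter is at most 2.  It is exactly 2 because distinct
   points with equal first coordinates are never adjacent.  Being a non-edge is
   witnessed by a finite initial segment (equal first coordinates, or one
   disagreement beyond the maximum), so the graph is closed. *)

From Stdlib Require Import Arith Lia Classical.

Definition edge (x y : baire) : Prop :=
  x 0 <> y 0 /\ forall n, Nat.max (x 0) (y 0) < n -> x n = y n.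

Lemma edge_sym x y : edge x y -> edge y x.
Proof.
  intros [Hxy Hagree]; split; [congruence |].
  intros n Hn; symmetry; apply Hagree; lia.
Qed.

Lemma edge_irrefl x : ~ edge x x.
Proof. intros [Hxx _]; apply Hxx; reflexivity. Qed.

Lemma simple_graph_edge : simple_graph edge.
Proof. split; [exact edge_sym | exact edge_irrefl]. Qed.

Lemma Pi01_edge : Pi01 edge.
Proof.
  intros x y Hnot.
  destruct (Nat.eq_dec (x 0) (y 0)) as [Heq0 | Hneq0].
  - exists 1; intros x' y' Hpre [Hneq' _].
    destruct (Hpre 0) as [Hx0 Hy0]; [lia |].
    apply Hneq'; congruence.
  - assert (Hbad : exists n, ~ (Nat.max (x 0) (y 0) < n -> x n = y n)).
    { apply not_all_ex_not; intros Hall; apply Hnot; split; assumption. }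
    destruct Hbad as [n Hn].
    exists (S n); intros x' y' Hpre [_ Hagree'].
    destruct (Hpre 0) as [Hx0 Hy0]; [lia |].
    destruct (Hpre n) as [Hxn Hyn]; [lia |].
    apply Hn; intros Hlt.
    rewrite <- Hxn, <- Hyn; apply Hagree'; rewrite Hx0, Hy0; exact Hlt.
Qed.

Lemma E0_trans x y z : E0 x y -> E0 y z -> E0 x z.
Proof.
  intros [m1 H1] [m2 H2]; exists (m1 + m2); intros n Hn.
  rewrite H1 by lia; apply H2; lia.
Qed.

Lemma edge_E0 x y : edge x y -> E0 x y.
Proof.
  intros [_ Hagree]; exists (S (Nat.max (x 0) (y 0))).
  intros n Hn; apply Hagree; lia.
Qed.

Lemma walk_sub_preorder (G E : brel) k x y :
  (forall x, E x x) -> (forall x y z, E x y -> E y z -> E x z) ->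
  (forall x y, G x y -> E x y) -> walk G k x y -> E x y.
Proof.
  intros Erefl Etrans GE; induction 1; [apply Erefl |].
  apply Etrans with y; auto.
Qed.

Lemma walk_edge_E0 k x y : walk edge k x y -> E0 x y.
Proof.
  apply walk_sub_preorder; [| exact E0_trans | exact edge_E0].
  intros x'; exists 0; reflexivity.
Qed.

Definition set_head (a : nat) (x : baire) : baire :=
  fun n => match n with 0 => a | S k => x (S k) end.

Lemma E0_walk2 x y : E0 x y -> walk edge 2 x y.
Proof.
  intros [m Hm].
  set (z := set_head (S (m + x 0 + y 0)) x).
  apply walk_cons with z; [| apply walk_cons with y; [| constructor]].
  - split; [simpl; lia |].
    intros [| n] Hn; [lia | reflexivity].
  - split; [simpl; lia |].
    intros [| n] Hn; [lia |].
    apply Hm; unfold z, set_head in Hn; lia.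
Qed.

Lemma connected_edge_E0 x y : connected edge x y <-> E0 x y.
Proof.
  split.
  - intros [k Hwalk]; exact (walk_edge_E0 _ _ _ Hwalk).
  - intros HE; exists 2; exact (E0_walk2 _ _ HE).
Qed.

Lemma diam_bound_edge : diam_bound edge 2.
Proof.
  intros x y Hconn; exists 2; split; [lia |].
  apply E0_walk2, connected_edge_E0; exact Hconn.
Qed.

Lemma walk_0_eq (G : brel) x y : walk G 0 x y -> x = y.
Proof. intros Hwalk; inversion Hwalk; reflexivity. Qed.

Lemma walk_1_edge (G : brel) x y : walk G 1 x y -> G x y.
Proof.
  intros Hwalk; inversion Hwalk as [| k x' z y' Hxz Hzy].
  apply walk_0_eq in Hzy; subst; assumption.
Qed.

Lemma has_diameter_intro (G : brel) k x y :
  diam_bound G k -> connected G x y -> (forall j, j < k -> ~ walk G j x y) ->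
  has_diameter G k.
Proof.
  intros Hbound Hconn Hfar; split; [exact Hbound |].
  intros k' Hk' Hbound'.
  destruct (Hbound' x y Hconn) as [j [Hj Hwalk]].
  apply (Hfar j); [lia | exact Hwalk].
Qed.

Lemma has_diameter_edge : has_diameter edge 2.
Proof.
  set (x := fun _ : nat => 0).
  set (y := fun n => match n with 1 => 1 | _ => 0 end).
  apply has_diameter_intro with x y; [exact diam_bound_edge | |].
  - apply connected_edge_E0.
    exists 2; intros [| [| n]] Hn; [lia | lia | reflexivity].
  - intros [| [| j]] Hj Hwalk; [| | lia].
    + apply walk_0_eq, (f_equal (fun f => f 1)) in Hwalk; discriminate.
    + apply walk_1_edge in Hwalk; destruct Hwalk as [Hhead _].
      apply Hhead; reflexivity.
Qed.

Theorem proposition3p8 : Pi01_graphable_diam E0 2.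
Proof.
  exists edge.
  split; [exact simple_graph_edge |].
  split; [exact Pi01_edge |].
  split; [exact connected_edge_E0 | exact has_diameter_edge].
Qed.
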